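(* Let $(G,S,C,\phi_0)$ be a minimal counterexample with outer face $D$ (so $S=V(D)$). If $e=uv$ is an edge of $G$ not in $E(D)$, then $|E(C_{uv})|\ge 2$. Moreover, if $e$ is not contained in a triangle, then $|E(C_{uv})|=3$.
   Context: All graphs are finite and simple. Two cycles are adjacent if they share at least one common edge. A $3$-correspondence assignment for $G$ consists of the list $L(u)=\{1,2,3\}$ for each vertex together with, for each edge $e=uv$, a matching $C_e$ (not necessarily perfect) between $\{u\}\times\{1,2,3\}$ and $\{v\}\times\{1,2,3\}$. A $C$-coloring is a map $\phi$ to $\{1,2,3\}$ with $(u,\phi(u))(v,\phi(v))\notin E(C_{uv})$ for every edge $uv$. For a closed walk $v_1\dots v_m$ ($v_m=v_1$), $C$ is inconsistent on it if there are colors $c_i$ with $(v_i,c_i)(v_{i+1},c_{i+1})\in E(C_{v_iv_{i+1}})$ for all $i\in[m-1]$ and $c_1\ne c_m$. A counterexample is a quadruple $(G,S,C,\phi_0)$ where $G$ is a plane graph with no two adjacent cycles of length at most $8$, $S\subseteq V(G)$ with $|S|\le 12$ is either a single vertex or the vertex set of the boundary of a face, $C$ is a $3$-correspondence assignment consistent on every closed walk of length $3$, and $\phi_0$ is a $C$-coloring of $G[S]$ that does not extend to a $C$-coloring of $G$. A minimal counterexample is a counterexample minimizing $|V(G)|$, subject to that minimizing $|E(G)|-|E(G[S])|$, and subject to both maximizing $\sum_{uv\in E(G)}|E(C_{uv})|$. In a minimal counterexample $S$ is the vertex set of a face, and the embedding is chosen so that this face is the outer face $D$. *)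

From HB Require Import structures.
From mathcomp Require Import all_boot perm.
Set Implicit Arguments. Unset Strict Implicit. Unset Printing Implicit Defensive.

(* Plane graphs as combinatorial maps (rotation systems) of genus 0.      *)
(* Vertices: finType V.  Darts (half-edges): finType Dt.                  *)
(*   alpha : the dart involution (the two halves of an edge),             *)
(*   sigma : the rotation of darts around their vertex,                   *)
(* Faces are the orbits of the face permutation  d |-> sigma (alpha d).   *)
Record plane_map (V Dt : finType) := PMap {
  pm_alpha : {perm Dt};
  pm_sigma : {perm Dt};
  pm_vert  : Dt -> V
}.

Section PlaneGraph.
Variables (V Dt : finType) (M : plane_map V Dt).

Definition alpha := pm_alpha M.
Definition sigma := pm_sigma M.
Definition vert := pm_vert M.

Definition fperm (d : Dt) : Dt := sigma (alpha d).

(* the relation generating connected components of the map *)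
Definition glink : rel Dt := fun x y => (y == alpha x) || (y == sigma x).

Definition adj : rel V :=
  fun u v => [exists d : Dt, (vert d == u) && (vert (alpha d) == v)].

(* Axioms of a simple plane graph:
   - alpha is a fixed-point-free involution,
   - sigma preserves vertices and acts transitively (cyclically) on the
     darts of each vertex,
   - no loops, no parallel edges,
   - Euler's formula V - E + F = 2 holds for every connected component
     with darts (genus 0), expressed globally as
     2 * (#non-isolated vertices + #faces) = #darts + 4 * #components. *)
Definition is_plane_graph : Prop :=
  [/\ forall d, alpha (alpha d) = d,
      forall d, alpha d != d,
      forall d, vert (sigma d) = vert d,
      forall d d', vert d = vert d' -> fconnect sigma d d' &
      [/\ forall d, vert (alpha d) != vert d,
      forall d d', vert d = vert d' -> vert (alpha d) = vert (alpha d') -> d = d'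
    & 2 * (fcard sigma Dt + fcard fperm Dt) = #|Dt| + 4 * n_comp glink Dt]].

Definition face_verts (d : Dt) : {set V} := [set vert x | x in fconnect fperm d].
Definition face_edges (d : Dt) : {set {set V}} :=
  [set [set vert x; vert (alpha x)] | x in fconnect fperm d].

End PlaneGraph.

Section GraphNotions.
Variables (V : finType) (g : rel V).

Definition edge_set : {set {set V}} :=
  [set [set p.1; p.2] | p in [pred p : V * V | g p.1 p.2]].

Definition induced_edge_set (S : {set V}) : {set {set V}} :=
  [set [set p.1; p.2] | p in [pred p : V * V | [&& g p.1 p.2, p.1 \in S & p.2 \in S]]].

Definition is_graph_cycle (s : seq V) : bool :=
  [&& 3 <= size s, uniq s & cycle g s].

Definition cycle_edges (s : seq V) : {set {set V}} :=
  [set [set p.1; p.2] | p in zip s (rot 1 s)].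

Definition no_adjacent_short_cycles : Prop :=
  forall s1 s2 : seq V,
    is_graph_cycle s1 -> is_graph_cycle s2 ->
    size s1 <= 8 -> size s2 <= 8 ->
    cycle_edges s1 != cycle_edges s2 ->
    cycle_edges s1 :&: cycle_edges s2 = set0.

End GraphNotions.

(* 3-correspondence assignments.  Colours {1,2,3} are 'I_3.               *)
(* C u v c c' means (u,c)(v,c') is an edge of the matching C_{uv}.        *)
Definition corr (V : finType) := V -> V -> 'I_3 -> 'I_3 -> bool.

Section Corr.
Variables (V : finType) (g : rel V) (C : corr V).

(* C_{uv} is a matching between {u}x[3] and {v}x[3], and C_{vu} = C_{uv} *)
Definition is_corr_assignment : Prop :=
  (forall u v c c', C u v c c' = C v u c' c) /\
  (forall u v c c1 c2, C u v c c1 -> C u v c c2 -> c1 = c2).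

Definition corr_size (u v : V) : nat := #|[set p : 'I_3 * 'I_3 | C u v p.1 p.2]|.

(* consistent on every closed walk v1 v2 v3 v4 = v1 of length 3 *)
Definition consistent_on_triangles : Prop :=
  forall (v1 v2 v3 : V) (c1 c2 c3 c4 : 'I_3),
    g v1 v2 -> g v2 v3 -> g v3 v1 ->
    C v1 v2 c1 c2 -> C v2 v3 c2 c3 -> C v3 v1 c3 c4 -> c1 = c4.

Definition is_C_coloring_on (A : {pred V}) (phi : V -> 'I_3) : Prop :=
  forall u v, u \in A -> v \in A -> g u v -> ~~ C u v (phi u) (phi v).

Definition is_C_coloring (phi : V -> 'I_3) : Prop :=
  is_C_coloring_on predT phi.

(* \sum_{uv in E(G)} |E(C_{uv})|  (sum over ordered pairs, halved) *)
Definition corr_weight : nat :=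
  (\sum_(p : V * V | g p.1 p.2) corr_size p.1 p.2) %/ 2.

End Corr.

Definition counterexample (V Dt : finType) (M : plane_map V Dt) (S : {set V})
    (C : corr V) (phi0 : V -> 'I_3) : Prop :=
  [/\ is_plane_graph M,
      no_adjacent_short_cycles (adj M),
      #|S| <= 12 &
      (exists v, S = [set v]) \/ (exists d : Dt, S = face_verts M d)] /\
  [/\ is_corr_assignment C,
      consistent_on_triangles (adj M) C,
      is_C_coloring_on (adj M) C (mem S) phi0
    & ~ exists phi, is_C_coloring (adj M) C phi /\ forall u, u \in S -> phi u = phi0 u].

Definition cx_vertices (V Dt : finType) (M : plane_map V Dt) : nat := #|V|.
Definition cx_edges (V Dt : finType) (M : plane_map V Dt) (S : {set V}) : nat :=
  #|edge_set (adj M)| - #|induced_edge_set (adj M) S|.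

Definition cx_better (V' Dt' : finType) (M' : plane_map V' Dt') (S' : {set V'}) (C' : corr V')
    (V Dt : finType) (M : plane_map V Dt) (S : {set V}) (C : corr V) : Prop :=
  cx_vertices M' < cx_vertices M \/
  (cx_vertices M' = cx_vertices M /\
   (cx_edges M' S' < cx_edges M S \/
    (cx_edges M' S' = cx_edges M S /\
     corr_weight (adj M) C < corr_weight (adj M') C'))).

Definition minimal_counterexample (V Dt : finType) (M : plane_map V Dt) (S : {set V})
    (C : corr V) (phi0 : V -> 'I_3) : Prop :=
  counterexample M S C phi0 /\
  forall (n m : nat) (M' : plane_map 'I_n 'I_m) (S' : {set 'I_n}) (C' : corr 'I_n)
         (phi0' : 'I_n -> 'I_3),
    counterexample M' S' C' phi0' -> ~ cx_better M' S' C' M S C.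

From mathcomp Require Import all_boot perm zify.
From Stdlib Require Import FunctionalExtensionality.
Set Implicit Arguments. Unset Strict Implicit. Unset Printing Implicit Defensive.

(* If C_uv could be replaced by a larger matching X, the result would be a
   counterexample on the same graph with larger total weight, contradicting
   minimality.  The precolouring stays non-extendable if X avoids
   (phi0 u, phi0 v) when both ends lie in S, and contains C_uv otherwise.
   Consistency on triangles is automatic when uv lies in no triangle;
   otherwise only the triangle uvw matters, and it is unique since two
   triangles through uv would be adjacent short cycles.  That a suitable X
   exists whenever |C_uv| <= 2 (no triangle) or |C_uv| <= 1 (X consistent
   with C_vw and C_wu) is a statement about the 34 matchings of K_{3,3},
   checked by computation. *)

(** * Matchings between two triples of colours *)

Definition rel3 := 'I_3 -> 'I_3 -> bool.

(* [enum 'I_3] does not reduce under [vm_compute]. *)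
Definition colours : seq 'I_3 := [:: @Ordinal 3 0 isT; @Ordinal 3 1 isT; @Ordinal 3 2 isT].
Definition colour_pairs : seq ('I_3 * 'I_3) := [seq (a, b) | a <- colours, b <- colours].

Lemma mem_colours c : c \in colours.
Proof. by case: c => [[|[|[|n]]] //]. Qed.

Lemma all_coloursP (P : pred 'I_3) : reflect (forall c, P c) (all P colours).
Proof. by apply: (iffP allP) => [H c|H c _]; [apply: H; apply: mem_colours | apply: H]. Qed.

Definition rel_size (X : rel3) : nat := count (fun p => X p.1 p.2) colour_pairs.

Lemma mem_colour_pairs p : p \in colour_pairs.
Proof. by case: p => a b; apply/allpairsP; exists (a, b); rewrite !mem_colours. Qed.

Lemma rel_sizeE (X : rel3) : rel_size X = #|[set p : 'I_3 * 'I_3 | X p.1 p.2]|.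
Proof.
rewrite /rel_size -size_filter -(card_uniqP _); last exact: filter_uniq.
by apply: eq_card => p; rewrite inE mem_filter mem_colour_pairs andbT.
Qed.

Definition converse (X : rel3) : rel3 := fun a b => X b a.

Lemma rel_size_converse (X : rel3) : rel_size (converse X) = rel_size X.
Proof.
pose flip (p : 'I_3 * 'I_3) := (p.2, p.1).
have flipK : involutive flip by case.
rewrite !rel_sizeE -(card_imset _ (inv_inj flipK)).
by apply: eq_card => p; rewrite -{1}[p]flipK (mem_imset _ _ (inv_inj flipK)) !inE.
Qed.

Definition functional3 (X : rel3) : bool :=
  all (fun a => all (fun b => all (fun b' => X a b ==> X a b' ==> (b == b'))
    colours) colours) colours.

Lemma functional3P (X : rel3) :
  reflect (forall a b b', X a b -> X a b' -> b = b') (functional3 X).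
Proof.
apply: (iffP (all_coloursP _)) => [H a b b' Hb Hb' | H a].
  by move: (H a) => /all_coloursP/(_ b)/all_coloursP/(_ b'); rewrite Hb Hb' => /eqP.
apply/all_coloursP => b; apply/all_coloursP => b'.
by apply/implyP => Hb; apply/implyP => Hb'; rewrite (H _ _ _ Hb Hb').
Qed.

Definition is_matching (X : rel3) : bool := functional3 X && functional3 (converse X).

Lemma rel_size_le3 (X : rel3) : is_matching X -> rel_size X <= 3.
Proof.
case/andP => /functional3P fX _; rewrite rel_sizeE -(@card_in_imset _ _ fst).
  by apply: leq_trans (max_card _) _; rewrite card_ord.
by move=> [a b] [a' b'] /=; rewrite !inE /= => Hab Hab' Ea; subst a'; rewrite (fX _ _ _ Hab Hab').
Qed.

(* The [if]s keep [vm_compute] from exploring walks that leave a matching early. *)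
Definition walk_consistent (X Y Z : rel3) : bool :=
  all (fun c1 => all (fun c2 => if X c1 c2 then
    all (fun c3 => if Y c2 c3 then all (fun c4 => Z c3 c4 ==> (c1 == c4)) colours else true)
      colours else true) colours) colours.

Lemma walk_consistentP (X Y Z : rel3) :
  reflect (forall c1 c2 c3 c4, X c1 c2 -> Y c2 c3 -> Z c3 c4 -> c1 = c4)
          (walk_consistent X Y Z).
Proof.
apply: (iffP (all_coloursP _)) => [H c1 c2 c3 c4 H12 H23 H34 | H c1].
  move: (H c1) => /all_coloursP/(_ c2); rewrite H12 => /all_coloursP/(_ c3).
  by rewrite H23 => /all_coloursP/(_ c4); rewrite H34 => /eqP.
apply/all_coloursP => c2; case: ifP => // H12; apply/all_coloursP => c3.
case: ifP => // H23; apply/all_coloursP => c4; apply/implyP => H34.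
by rewrite (H _ _ _ _ H12 H23 H34).
Qed.

(* [X], [Y], [Z] are the correspondences on the sides uv, vw, wu of a triangle;
   the conjuncts are its six closed walks of length 3. *)
Definition triangle_consistent (X Y Z : rel3) : bool :=
  [&& walk_consistent X Y Z, walk_consistent Y Z X, walk_consistent Z X Y,
      walk_consistent (converse Z) (converse Y) (converse X),
      walk_consistent (converse Y) (converse X) (converse Z)
    & walk_consistent (converse X) (converse Z) (converse Y)].

Definition subrelb (X Y : rel3) : bool :=
  all (fun a => all (fun b => X a b ==> Y a b) colours) colours.

Lemma subrelbP (X Y : rel3) : reflect (subrel X Y) (subrelb X Y).
Proof.
apply: (iffP (all_coloursP _)) => [H a b Hab | H a].
  by move: (H a) => /all_coloursP/(_ b); rewrite Hab.
by apply/all_coloursP => b; apply/implyP; apply: H.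
Qed.

Definition enlargeable (P : pred rel3) (X : rel3) : Prop :=
  (forall a b, ~~ X a b -> exists2 X', P X' & rel_size X < rel_size X' /\ ~~ X' a b) /\
  (exists2 X', P X' & rel_size X < rel_size X' /\ subrel X X').

Definition enlargeable_in (L : seq rel3) (X : rel3) : bool :=
  all (fun p => has (fun X' => (rel_size X < rel_size X') && ~~ X' p.1 p.2) L)
      [seq p <- colour_pairs | ~~ X p.1 p.2] &&
  has (fun X' => (rel_size X < rel_size X') && subrelb X X') L.

Lemma enlargeable_inP (P : pred rel3) (L : seq rel3) (X : rel3) :
  (forall Q : pred rel3, has Q L -> exists2 X', P X' & Q X') ->
  enlargeable_in L X -> enlargeable P X.
Proof.
move=> hasL /andP [/allP avoid extend]; split => [a b nXab | ].
  have [|X' PX' /andP [lt nX'ab]] := hasL _ (avoid (a, b) _); last by exists X'.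
  by rewrite mem_filter nXab mem_colour_pairs.
by have [X' PX' /andP [lt /subrelbP sub]] := hasL _ extend; exists X'.
Qed.

Definition rel_of_table (t : seq bool) : rel3 := fun a b => nth false t (3 * a + b).

Fixpoint tables (n : nat) : seq (seq bool) :=
  if n is k.+1 then [seq true :: t | t <- tables k] ++ [seq false :: t | t <- tables k]
  else [:: [::]].

Lemma mem_tables n (t : seq bool) : size t = n -> t \in tables n.
Proof.
elim: n t => [|n IHn] [|b t] //= [st].
by rewrite mem_cat; case: b; rewrite map_f ?orbT ?IHn.
Qed.

Lemma rel_of_tableK (X : rel3) : rel_of_table [seq X p.1 p.2 | p <- colour_pairs] = X.
Proof.
apply: functional_extensionality => a; apply: functional_extensionality => b.
by move: (mem_colours a) (mem_colours b); rewrite !inE => /or3P [] /eqP -> /or3P [] /eqP ->.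
Qed.

Definition matchings : seq rel3 := [seq X <- map rel_of_table (tables 9) | is_matching X].

Lemma all_matchings (P : pred rel3) : all P matchings -> forall X, is_matching X -> P X.
Proof.
rewrite all_filter all_map => /allP all_tables X mX.
have /all_tables /= : [seq X p.1 p.2 | p <- colour_pairs] \in tables 9.
  by apply: mem_tables; rewrite size_map.
by rewrite rel_of_tableK mX.
Qed.

Lemma has_matchings (P : pred rel3) : has P matchings -> exists2 X, is_matching X & P X.
Proof.
rewrite /matchings; elim: (tables 9) => //= t ts IHts.
by case: ifP => [mt /= /orP [Pt | /IHts //] | _ /IHts //]; exists (rel_of_table t).
Qed.

Lemma has_filter_predI (T : Type) (p q : pred T) (s : seq T) :
  has p [seq x <- s | q x] = has (predI p q) s.
Proof. by elim: s => //= x s IHs; case: (q x); rewrite /= IHs ?andbT ?andbF. Qed.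

Definition enlargeable_upto (k : nat) (L : seq rel3) : bool :=
  all (enlargeable_in L) [seq X <- L | rel_size X <= k].

Lemma matchings_enlargeable_upto2 : enlargeable_upto 2 matchings.
Proof. by vm_compute. Qed.

Lemma matching_enlargeable (X : rel3) :
  is_matching X -> rel_size X <= 2 -> enlargeable is_matching X.
Proof.
move=> mX sX; apply: enlargeable_inP; first exact: has_matchings.
move: matchings_enlargeable_upto2; rewrite /enlargeable_upto all_filter.
by move=> /all_matchings/(_ X mX)/implyP; apply.
Qed.

Lemma triangle_consistent_matchings_enlargeable_upto1 :
  all (fun Y => all (fun Z =>
    enlargeable_upto 1 [seq X <- matchings | triangle_consistent X Y Z]) matchings) matchings.
Proof. by vm_compute. Qed.

Lemma triangle_matching_enlargeable (X Y Z : rel3) :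
  is_matching X -> is_matching Y -> is_matching Z ->
  triangle_consistent X Y Z -> rel_size X <= 1 ->
  enlargeable (fun X' => is_matching X' && triangle_consistent X' Y Z) X.
Proof.
move=> mX mY mZ cX sX.
apply: (@enlargeable_inP _ [seq X' <- matchings | triangle_consistent X' Y Z]) => [Q|].
  rewrite has_filter_predI => /has_matchings [X' mX' /andP [QX' cX']].
  by exists X'; rewrite ?mX'.
have := all_matchings (all_matchings triangle_consistent_matchings_enlargeable_upto1 mY) mZ.
rewrite /enlargeable_upto 2!all_filter.
by move=> /all_matchings/(_ X mX)/implyP/(_ cX)/implyP; apply.
Qed.

(** * Replacing the correspondence on one edge *)

Section Correspondences.
Variables (V : finType) (g : rel V).
Implicit Types (C : corr V).

Lemma corr_converse C : is_corr_assignment C -> forall x y, C y x = converse (C x y).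
Proof.
case=> Csym _ x y; apply: functional_extensionality => c.
by apply: functional_extensionality => c'; rewrite Csym.
Qed.

Lemma corr_size_sym C : is_corr_assignment C -> forall x y, corr_size C y x = corr_size C x y.
Proof. by move=> ca x y; rewrite /corr_size -!rel_sizeE (corr_converse ca) rel_size_converse. Qed.

Lemma corr_matching C : is_corr_assignment C -> forall x y, is_matching (C x y).
Proof.
case=> Csym Cfun x y; apply/andP; split; apply/functional3P => c c1 c2; first exact: Cfun.
by rewrite /converse !(Csym x y); apply: Cfun.
Qed.

Definition walk_consistent_at C (a b c : V) : bool := walk_consistent (C a b) (C b c) (C c a).

Definition consistent_at C (a b c : V) : bool :=
  [&& walk_consistent_at C a b c, walk_consistent_at C b c a, walk_consistent_at C c a b,
      walk_consistent_at C a c b, walk_consistent_at C c b a & walk_consistent_at C b a c].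

Lemma consistent_atE C a b c : is_corr_assignment C ->
  consistent_at C a b c = triangle_consistent (C a b) (C b c) (C c a).
Proof.
move=> ca; rewrite /consistent_at /walk_consistent_at.
by rewrite !(corr_converse ca c) (corr_converse ca b a).
Qed.

Lemma consistent_at_rot C a b c : consistent_at C a b c = consistent_at C b c a.
Proof. by rewrite /consistent_at; do 6![case: (walk_consistent_at C _ _ _)]. Qed.

Lemma consistent_at_swap C a b c : consistent_at C a b c = consistent_at C a c b.
Proof. by rewrite /consistent_at; do 6![case: (walk_consistent_at C _ _ _)]. Qed.

Lemma consistent_on_triangles_at C :
  (forall a b c, g a b -> g b c -> g c a -> consistent_at C a b c) ->
  consistent_on_triangles g C.
Proof.
move=> H a b c c1 c2 c3 c4 gab gbc gca.
by have /andP [/walk_consistentP walk _] := H a b c gab gbc gca; apply: walk.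
Qed.

Lemma consistent_at_triangle C a b c : symmetric g -> consistent_on_triangles g C ->
  g a b -> g b c -> g c a -> consistent_at C a b c.
Proof.
move=> gsym ct gab gbc gca.
have walk x y z : g x y -> g y z -> g z x -> walk_consistent_at C x y z.
  by move=> gxy gyz gzx; apply/walk_consistentP => c1 c2 c3 c4; apply: ct.
by rewrite /consistent_at !walk // gsym.
Qed.

End Correspondences.

Definition set_edge_corr (V : finType) (C : corr V) (u v : V) (X : rel3) : corr V :=
  fun x y => if (x, y) == (u, v) then X else if (x, y) == (v, u) then converse X else C x y.

Section EdgeReplacement.
Variables (V : finType) (g : rel V) (C : corr V) (u v : V) (X : rel3).
Hypothesis neq_uv : u != v.
Local Notation C' := (set_edge_corr C u v X).

Lemma set_edge_corr_uv : C' u v = X.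
Proof. by rewrite /set_edge_corr eqxx. Qed.

Lemma set_edge_corr_vu : C' v u = converse X.
Proof. by rewrite /set_edge_corr xpair_eqE eq_sym (negbTE neq_uv) eqxx. Qed.

Lemma set_edge_corr_other x y : (x, y) \notin [:: (u, v); (v, u)] -> C' x y = C x y.
Proof. by rewrite !inE negb_or /set_edge_corr => /andP [/negbTE -> /negbTE ->]. Qed.

Lemma set_edge_corr_offl x y : x != u -> x != v -> C' x y = C x y.
Proof. by move=> /negPf xu /negPf xv; rewrite set_edge_corr_other // !inE !xpair_eqE xu xv. Qed.

Lemma set_edge_corr_offr x y : y != u -> y != v -> C' x y = C x y.
Proof.
by move=> /negPf yu /negPf yv; rewrite set_edge_corr_other // !inE !xpair_eqE yu yv !andbF.
Qed.

Lemma set_edge_corrP x y : [\/ x = u /\ y = v, x = v /\ y = u | C' x y = C x y].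
Proof.
have [|/set_edge_corr_other] := boolP ((x, y) \in [:: (u, v); (v, u)]); last by constructor 3.
by rewrite !inE => /orP [] /eqP [-> ->]; [constructor 1 | constructor 2].
Qed.

Lemma corr_assignment_set_edge :
  is_corr_assignment C -> is_matching X -> is_corr_assignment C'.
Proof.
move=> ca /andP [/functional3P Xfun /functional3P Xinj]; have [Csym Cfun] := ca; split.
  move=> x y c c'; have [|xy_other] := boolP ((x, y) \in [:: (u, v); (v, u)]).
    by rewrite !inE => /orP [] /eqP [-> ->]; rewrite set_edge_corr_uv set_edge_corr_vu.
  have yx_other : (y, x) \notin [:: (u, v); (v, u)].
    by apply: contra xy_other; rewrite !inE => /orP [] /eqP [-> ->]; rewrite eqxx ?orbT.
  by rewrite !set_edge_corr_other.
move=> x y c c1 c2; case: (set_edge_corrP x y) => [[-> ->] | [-> ->] | ->].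
- by rewrite set_edge_corr_uv; apply: Xfun.
- by rewrite set_edge_corr_vu; apply: Xinj.
- exact: Cfun.
Qed.

Lemma corr_weight_set_edge : g u v -> g v u -> is_corr_assignment C ->
  rel_size (C u v) < rel_size X -> corr_weight g C < corr_weight g C'.
Proof.
move=> guv gvu ca lt_size.
have ca' := corr_assignment_set_edge ca.
have neq_pairs : (v, u) != (u, v) by rewrite xpair_eqE negb_and eq_sym neq_uv.
have size_uv : corr_size C' u v = rel_size X by rewrite /corr_size set_edge_corr_uv rel_sizeE.
have size_vu : corr_size C' v u = rel_size X.
  by rewrite /corr_size set_edge_corr_vu -rel_sizeE rel_size_converse.
have size_Cuv : corr_size C u v = rel_size (C u v) by rewrite rel_sizeE.
have size_Cvu : corr_size C v u = rel_size (C u v) by rewrite corr_size_sym // rel_sizeE.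
rewrite /corr_weight (bigD1 (u, v)) //= [X in _ < X %/ 2](bigD1 (u, v)) //=.
rewrite (bigD1 (v, u)) /=; last by rewrite gvu neq_pairs.
rewrite [X in _ < (_ + X) %/ 2](bigD1 (v, u)) /=; last by rewrite gvu neq_pairs.
rewrite (eq_bigr (fun p => corr_size C' p.1 p.2)) => [|[x y] /andP [/andP [_ ne1] ne2]].
  by rewrite size_uv size_vu size_Cuv size_Cvu; lia.
by rewrite /corr_size set_edge_corr_other // !inE negb_or ne1 ne2.
Qed.

Lemma coloring_on_set_edge (A : {pred V}) (phi : V -> 'I_3) :
  is_C_coloring_on g C A phi -> (u \in A -> v \in A -> ~~ X (phi u) (phi v)) ->
  is_C_coloring_on g C' A phi.
Proof.
move=> col uv_ok x y Ax Ay gxy; case: (set_edge_corrP x y) => [[Ex Ey] | [Ex Ey] | ->].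
- by subst x y; rewrite set_edge_corr_uv; apply: uv_ok.
- by subst x y; rewrite set_edge_corr_vu; apply: uv_ok.
- exact: col.
Qed.

Lemma coloring_of_set_edge (phi : V -> 'I_3) : is_corr_assignment C ->
  (~~ X (phi u) (phi v) -> ~~ C u v (phi u) (phi v)) ->
  is_C_coloring g C' phi -> is_C_coloring g C phi.
Proof.
move=> ca uv_ok col x y _ _ gxy; have := col x y isT isT gxy.
case: (set_edge_corrP x y) => [[Ex Ey] | [Ex Ey] | -> //]; subst x y.
  by rewrite set_edge_corr_uv.
by rewrite set_edge_corr_vu (corr_converse ca u).
Qed.

Lemma consistent_set_edge : symmetric g -> is_corr_assignment C -> is_matching X ->
  consistent_on_triangles g C ->
  (forall w, g u w -> g v w -> consistent_at C' u v w) ->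
  consistent_on_triangles g C'.
Proof.
move=> gsym ca mX ct uv_ok; apply: consistent_on_triangles_at.
pose uv_side a b := (a, b) \in [:: (u, v); (v, u)].
have side_ok a b c : g a b -> g b c -> g c a -> uv_side a b -> consistent_at C' a b c.
  move=> gab gbc gca; rewrite /uv_side !inE => /orP [] /eqP [Ea Eb]; subst a b.
    by apply: uv_ok; rewrite // gsym.
  by rewrite consistent_at_rot consistent_at_swap; apply: uv_ok; rewrite // gsym.
move=> a b c gab gbc gca.
have [ab | ab] := boolP (uv_side a b); first exact: side_ok.
have [bc | bc] := boolP (uv_side b c); first by rewrite consistent_at_rot; apply: side_ok.
have [ca_ | ca_] := boolP (uv_side c a); first by rewrite -consistent_at_rot; apply: side_ok.
have ca' := corr_assignment_set_edge ca mX.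
rewrite consistent_atE // (set_edge_corr_other ab) (set_edge_corr_other bc).
rewrite (set_edge_corr_other ca_).
by rewrite -consistent_atE //; apply: consistent_at_triangle.
Qed.

End EdgeReplacement.

Section PlaneGraph.
Variables (V Dt : finType) (M : plane_map V Dt).
Hypothesis plane : is_plane_graph M.

Lemma adj_irr : irreflexive (adj M).
Proof.
case: plane => _ _ _ _ [vert_alpha _ _] x; apply/existsP => -[d /andP [/eqP Ed /eqP Ead]].
by move: (vert_alpha d); rewrite Ed Ead eqxx.
Qed.

Lemma adj_sym : symmetric (adj M).
Proof.
case: plane => alphaK _ _ _ _.
have adjC x y : adj M x y -> adj M y x.
  case/existsP => d /andP [Ed Ead].
  by apply/existsP; exists (alpha M d); rewrite alphaK Ed Ead.
by move=> x y; apply/idP/idP; apply: adjC.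
Qed.

End PlaneGraph.

Lemma common_neighbour_uniq (V : finType) (g : rel V) (u v w w' : V) :
  symmetric g -> irreflexive g -> no_adjacent_short_cycles g ->
  g u v -> g u w -> g v w -> g u w' -> g v w' -> w' = w.
Proof.
move=> gsym girr noadj guv guw gvw guw' gvw'; apply/eqP/negPn/negP => /negPf w'w.
have neq x y : g x y -> x != y by apply: contraTneq => ->; rewrite girr.
have triangle z : g u z -> g v z -> is_graph_cycle g [:: u; v; z].
  move=> guz gvz; rewrite /is_graph_cycle /= !inE negb_or !neq //=.
  by rewrite guv gvz gsym guz.
have edges z : cycle_edges [:: u; v; z] = [set [set u; v]; [set v; z]; [set z; u]].
  apply/setP => A; rewrite /cycle_edges !inE; apply/imsetP/idP.
    by case=> p; rewrite !inE => /or3P [] /eqP -> ->; rewrite eqxx ?orbT.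
  by case/orP => [/orP [] |] /eqP ->; [exists (u, v) | exists (v, z) | exists (z, u)];
    rewrite ?inE ?eqxx ?orbT.
suff: cycle_edges [:: u; v; w] != cycle_edges [:: u; v; w'].
  move/(noadj _ _ (triangle _ guw gvw) (triangle _ guw' gvw') isT isT)/setP/(_ [set u; v]).
  by rewrite !edges !inE eqxx.
have [/negPf wu /negPf wv] : w != u /\ w != v by rewrite !(eq_sym w) !neq.
rewrite !edges; apply/negP => /eqP/setP/(_ [set v; w]); rewrite !inE eqxx orbT /= => /esym.
by case/orP => [/orP [] |] /eqP/setP/(_ w); rewrite !inE eqxx ?wu ?wv ?(eq_sym w) ?w'w.
Qed.

Lemma consistent_set_edge_triangle (V : finType) (g : rel V) (C : corr V) (u v w : V)
    (X : rel3) :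
  symmetric g -> irreflexive g -> no_adjacent_short_cycles g ->
  is_corr_assignment C -> consistent_on_triangles g C -> is_matching X ->
  g u v -> g u w -> g v w -> triangle_consistent X (C v w) (C w u) ->
  consistent_on_triangles g (set_edge_corr C u v X).
Proof.
move=> gsym girr noadj ca ct mX guv guw gvw tX.
have neq x y : g x y -> x != y by apply: contraTneq => ->; rewrite girr.
have neq_uv := neq _ _ guv; have neq_uw := neq _ _ guw; have neq_vw := neq _ _ gvw.
apply: consistent_set_edge => // w' guw' gvw'.
rewrite (common_neighbour_uniq gsym girr noadj guv guw gvw guw' gvw').
have ca' := corr_assignment_set_edge neq_uv ca mX.
rewrite consistent_atE // set_edge_corr_uv.
by rewrite set_edge_corr_offr 1?set_edge_corr_offl // 1?eq_sym.
Qed.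

(** * Relabelling by ordinals *)

Lemma enum_val_connect (T : finType) (e : rel T) (e' : rel 'I_#|T|) :
  connect_sym e -> connect_sym e' ->
  (forall i j, e' i j = e (enum_val i) (enum_val j)) ->
  n_comp e' 'I_#|T| = n_comp e T /\
  forall i j, connect e' i j = connect e (enum_val i) (enum_val j).
Proof.
move=> sym_e sym_e' ee'.
have cl : closed e T by [].
have sub : T \subset codom (@enum_val T T).
  by apply/subsetP => x _; apply/codomP; exists (enum_rank x); rewrite enum_rankK.
have base : rel_base (@enum_val T T) e e' [predC T] by move=> i j _; rewrite ee'.
have adj := strict_adjunction sym_e' cl (@enum_val_inj T T) sub base.
split; last by case: adj => _ F i j; apply: F.
rewrite -(adjunction_n_comp enum_val sym_e sym_e' cl adj).
by apply: eq_n_comp_r => i; rewrite !inE.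
Qed.

Lemma glink_sym (V Dt : finType) (M : plane_map V Dt) : connect_sym (glink M).
Proof.
have E : glink M =2 relU (frel (alpha M)) (frel (sigma M)).
  by move=> x y; rewrite /glink /= !(eq_sym y).
by move=> x y; rewrite !(eq_connect E); apply/relU_sym => a b; apply/fconnect_sym/perm_inj.
Qed.

Lemma fperm_inj (V Dt : finType) (M : plane_map V Dt) : injective (fperm M).
Proof. by move=> x y /perm_inj/perm_inj. Qed.

Section OrdinalRelabelling.
Variables (V Dt : finType) (M : plane_map V Dt).
Local Notation n := #|V|.
Local Notation m := #|Dt|.
Local Notation hV := (@enum_val V V).
Local Notation hD := (@enum_val Dt Dt).

Lemma ord_conj_inj (p : {perm Dt}) : injective (fun i : 'I_m => enum_rank (p (hD i))).
Proof. by move=> i j /enum_rank_inj/perm_inj/enum_val_inj. Qed.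

(* Minimality only compares with counterexamples on ordinal types, so an improved
   counterexample has to be transported to ['I_#|V|] and ['I_#|Dt|]. *)
Definition ord_map : plane_map 'I_n 'I_m :=
  PMap (perm (@ord_conj_inj (alpha M))) (perm (@ord_conj_inj (sigma M)))
       (fun i => enum_rank (vert M (hD i))).

Lemma alpha_ord i : hD (alpha ord_map i) = alpha M (hD i).
Proof. by rewrite /alpha /= permE enum_rankK. Qed.

Lemma sigma_ord i : hD (sigma ord_map i) = sigma M (hD i).
Proof. by rewrite /sigma /= permE enum_rankK. Qed.

Lemma vert_ord i : hV (vert ord_map i) = vert M (hD i).
Proof. by rewrite /vert /= enum_rankK. Qed.

Lemma fperm_ord i : hD (fperm ord_map i) = fperm M (hD i).
Proof. by rewrite /fperm sigma_ord alpha_ord. Qed.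

Lemma adj_ord i j : adj ord_map i j = adj M (hV i) (hV j).
Proof.
apply/existsP/existsP => [[d /andP [/eqP <- /eqP <-]] | [d /andP [/eqP Ed /eqP Ead]]].
  by exists (hD d); rewrite !vert_ord alpha_ord !eqxx.
exists (enum_rank d); rewrite -!(inj_eq (@enum_val_inj _ _)) !vert_ord alpha_ord enum_rankK.
by rewrite Ed Ead !eqxx.
Qed.

Let frel_sigma_ord i j : frel (sigma ord_map) i j = frel (sigma M) (hD i) (hD j).
Proof. by rewrite /= -sigma_ord (inj_eq (@enum_val_inj _ _)). Qed.

Let frel_fperm_ord i j : frel (fperm ord_map) i j = frel (fperm M) (hD i) (hD j).
Proof. by rewrite /= -fperm_ord (inj_eq (@enum_val_inj _ _)). Qed.

Let glink_ord i j : glink ord_map i j = glink M (hD i) (hD j).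
Proof. by rewrite /glink -alpha_ord -sigma_ord !(inj_eq (@enum_val_inj _ _)). Qed.

Let sigma_transport := enum_val_connect (fconnect_sym (@perm_inj _ (sigma M)))
  (fconnect_sym (@perm_inj _ (sigma ord_map))) frel_sigma_ord.
Let fperm_transport := enum_val_connect (fconnect_sym (@fperm_inj _ _ M))
  (fconnect_sym (@fperm_inj _ _ ord_map)) frel_fperm_ord.
Let glink_transport := enum_val_connect (glink_sym M) (glink_sym ord_map) glink_ord.

Lemma plane_graph_ord : is_plane_graph M -> is_plane_graph ord_map.
Proof.
case=> alphaK alpha_neq vert_sigma vert_orbit [vert_alpha simple euler]; split.
- by move=> d; apply: enum_val_inj; rewrite !alpha_ord alphaK.
- by move=> d; rewrite -(inj_eq (@enum_val_inj _ _)) alpha_ord alpha_neq.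
- by move=> d; apply: enum_val_inj; rewrite !vert_ord sigma_ord vert_sigma.
- by move=> d d' E; rewrite sigma_transport.2; apply: vert_orbit; rewrite -!vert_ord E.
split.
- by move=> d; rewrite -(inj_eq (@enum_val_inj _ _)) !vert_ord alpha_ord vert_alpha.
- move=> d d' E Ea; apply/enum_val_inj/simple; first by rewrite -!vert_ord E.
  by rewrite -!alpha_ord -!vert_ord Ea.
- by rewrite card_ord sigma_transport.1 fperm_transport.1 glink_transport.1.
Qed.

Lemma face_verts_ord d : face_verts ord_map (enum_rank d) = enum_rank @: face_verts M d.
Proof.
apply/setP => i; apply/imsetP/imsetP => [[x Hx ->] | [y /imsetP [x Hx ->] ->]].
  exists (vert M (hD x)); last by rewrite /vert.
  by apply/imsetP; exists (hD x); rewrite // inE -(enum_rankK d) -fperm_transport.2.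
exists (enum_rank x); first by rewrite inE fperm_transport.2 !enum_rankK.
by rewrite /vert /= enum_rankK.
Qed.

End OrdinalRelabelling.

Lemma imset_set2 (T T' : finType) (f : T -> T') a b : f @: [set a; b] = [set f a; f b].
Proof. by rewrite imsetU1 imset_set1. Qed.

Lemma cycle_edges_map (T T' : finType) (f : T -> T') (s : seq T) :
  cycle_edges (map f s) = (fun A : {set T} => f @: A) @: cycle_edges s.
Proof.
have zip_map (t : seq T) : zip (map f s) (map f t) = map (fun p => (f p.1, f p.2)) (zip s t).
  by elim: s t => [|x s IHs] [|y t] //=; rewrite IHs.
rewrite /cycle_edges -map_rot zip_map; apply/setP => A; apply/imsetP/imsetP.
  case=> _ /mapP [p Hp ->] ->; exists [set p.1; p.2]; last by rewrite imset_set2.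
  by apply/imsetP; exists p.
by case=> _ /imsetP [p Hp ->] ->; exists (f p.1, f p.2); rewrite ?imset_set2 ?map_f.
Qed.

Lemma no_adjacent_short_cycles_inj (T T' : finType) (g : rel T) (g' : rel T') (f : T' -> T) :
  injective f -> (forall x y, g' x y = g (f x) (f y)) ->
  no_adjacent_short_cycles g -> no_adjacent_short_cycles g'.
Proof.
move=> f_inj gg' noadj s1 s2.
have cycle_map s : is_graph_cycle g' s = is_graph_cycle g (map f s).
  by rewrite /is_graph_cycle size_map (map_inj_uniq f_inj) cycle_map (eq_cycle gg').
have imf_inj : injective (fun A : {set T'} => f @: A) by apply/imset_inj.
have imimf_inj := imset_inj imf_inj.
rewrite !cycle_map -(size_map f s1) -(size_map f s2) => c1 c2 z1 z2 ne.
have := noadj _ _ c1 c2 z1 z2; rewrite !cycle_edges_map (inj_eq imimf_inj) => /(_ ne) E.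
apply/setP => A; rewrite in_set0 inE; apply/negbTE/negP => /andP [A1 A2].
have : f @: A \in [set f @: B | B : {set T'} in cycle_edges s1]
                :&: [set f @: B | B : {set T'} in cycle_edges s2].
  by rewrite inE !(mem_imset _ _ imf_inj) A1 A2.
by rewrite E in_set0.
Qed.

Lemma card_pair_sets_enum_val (T : finType) (P : {pred T * T})
    (P' : {pred 'I_#|T| * 'I_#|T|}) :
  (forall p, (p \in P') = ((enum_val p.1, enum_val p.2) \in P)) ->
  #|[set [set p.1; p.2] | p in P']| = #|[set [set p.1; p.2] | p in P]|.
Proof.
move=> PP'; rewrite -(card_imset _ (imset_inj (@enum_val_inj T T))).
apply: eq_card => A; apply/imsetP/imsetP => [[_ /imsetP [p Pp ->] ->] | [[a b] Pab ->]].
  by exists (enum_val p.1, enum_val p.2); rewrite -?PP' ?imset_set2.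
exists [set enum_rank a; enum_rank b]; last by rewrite imset_set2 !enum_rankK.
by apply/imsetP; exists (enum_rank a, enum_rank b); rewrite // PP' /= !enum_rankK.
Qed.

Definition ord_corr (V : finType) (C : corr V) : corr 'I_#|V| :=
  fun i j => C (enum_val i) (enum_val j).

Section OrdinalCounterexample.
Variables (V Dt : finType) (M : plane_map V Dt).
Local Notation hV := (@enum_val V V).

Lemma mem_enum_rank_imset (S : {set V}) i : (i \in enum_rank @: S) = (hV i \in S).
Proof. by rewrite -{1}(enum_valK i) mem_imset //; apply: enum_rank_inj. Qed.

Lemma cx_edges_ord (S : {set V}) : cx_edges (ord_map M) (enum_rank @: S) = cx_edges M S.
Proof.
rewrite /cx_edges /edge_set /induced_edge_set.
by congr (_ - _); apply: card_pair_sets_enum_val => p; rewrite !inE adj_ord ?mem_enum_rank_imset.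
Qed.

Lemma corr_weight_ord (C : corr V) :
  corr_weight (adj (ord_map M)) (ord_corr C) = corr_weight (adj M) C.
Proof.
rewrite /corr_weight (reindex (fun p : 'I_#|V| * 'I_#|V| => (hV p.1, hV p.2))) /=.
  by congr (_ %/ 2); apply: eq_bigl => p; rewrite adj_ord.
exists (fun p => (enum_rank p.1, enum_rank p.2)) => -[a b] _ /=.
  by rewrite !enum_valK.
by rewrite !enum_rankK.
Qed.

Lemma counterexample_ord (S : {set V}) (C : corr V) (phi0 : V -> 'I_3) :
  counterexample M S C phi0 ->
  counterexample (ord_map M) (enum_rank @: S) (ord_corr C) (phi0 \o hV).
Proof.
have adj_ordE := adj_ord M.
case=> [[plane noadj cardS faceS] [[Csym Cmatch] Ctri col not_ext]]; split; split.
- exact: plane_graph_ord.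
- exact: no_adjacent_short_cycles_inj (@enum_val_inj _ _) adj_ordE noadj.
- by rewrite card_imset //; apply: enum_rank_inj.
- case: faceS => [[v ->] | [d ->]]; [left; exists (enum_rank v) | right; exists (enum_rank d)].
    by rewrite imset_set1.
  by rewrite face_verts_ord.
- by split => [i j c c' | i j c c1 c2]; [apply: Csym | apply: Cmatch].
- by move=> i j k c1 c2 c3 c4; rewrite !adj_ordE; apply: Ctri.
- by move=> i j; rewrite !mem_enum_rank_imset adj_ordE; apply: col.
case=> phi [phi_col phi_ext]; apply: not_ext; exists (phi \o enum_rank); split.
  move=> x y _ _; have := phi_col (enum_rank x) (enum_rank y) isT isT.
  by rewrite adj_ordE /ord_corr !enum_rankK.
by move=> v Sv /=; rewrite phi_ext ?mem_enum_rank_imset /= enum_rankK.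
Qed.

Lemma cx_better_ord (S : {set V}) (C C' : corr V) :
  corr_weight (adj M) C < corr_weight (adj M) C' ->
  cx_better (ord_map M) (enum_rank @: S) (ord_corr C') M S C.
Proof.
move=> lt_weight; right; split; first exact: card_ord.
by right; split; rewrite ?cx_edges_ord ?corr_weight_ord.
Qed.

End OrdinalCounterexample.

(** * Minimal counterexamples *)

Lemma counterexample_set_edge (V Dt : finType) (M : plane_map V Dt) (S : {set V})
    (C : corr V) (phi0 : V -> 'I_3) (u v : V) (X : rel3) :
  counterexample M S C phi0 -> adj M u v -> is_matching X ->
  (if (u \in S) && (v \in S) then ~~ X (phi0 u) (phi0 v) else subrelb (C u v) X) ->
  consistent_on_triangles (adj M) (set_edge_corr C u v X) ->
  counterexample M S (set_edge_corr C u v X) phi0.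
Proof.
case=> [[plane ? ? ?] [ca _ col not_ext]] guv mX X_ok ct'; split=> //.
have neq_uv : u != v by apply: contraTneq guv => ->; rewrite adj_irr.
split=> //; first exact: corr_assignment_set_edge.
  by apply: coloring_on_set_edge => // uS vS; move: X_ok; rewrite uS vS.
case=> phi [phi_col phi_ext]; apply: not_ext; exists phi; split=> //.
apply: coloring_of_set_edge phi_col => //.
move: X_ok; case: ifP => [/andP [uS vS] _ _ | _ /subrelbP sub].
  by rewrite !phi_ext //; apply: col.
by apply: contra; apply: sub.
Qed.

Lemma minimal_counterexample_not_enlargeable (V Dt : finType) (M : plane_map V Dt)
    (S : {set V}) (C : corr V) (phi0 : V -> 'I_3) (u v : V) (P : pred rel3) :
  minimal_counterexample M S C phi0 -> adj M u v ->
  (forall X, P X -> is_matching X /\ consistent_on_triangles (adj M) (set_edge_corr C u v X)) ->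
  ~ enlargeable P (C u v).
Proof.
case=> cx min guv P_ok [avoid extend].
suff [X /P_ok [mX ct'] [lt_size X_ok]] : exists2 X, P X & rel_size (C u v) < rel_size X /\
    (if (u \in S) && (v \in S) then ~~ X (phi0 u) (phi0 v) else subrelb (C u v) X).
  have cx' := counterexample_set_edge cx guv mX X_ok ct'.
  apply: min (counterexample_ord cx') (cx_better_ord _ _).
  have [[plane _ _ _] [ca _ _ _]] := cx.
  apply: corr_weight_set_edge => //; last by rewrite adj_sym.
  by apply: contraTneq guv => ->; rewrite adj_irr.
have [/andP [uS vS] | notS] := boolP ((u \in S) && (v \in S)).
  have [_ [_ _ col _]] := cx.
  by have [X PX [lt nX]] := avoid _ _ (col u v uS vS guv); exists X.
have [X PX [lt sub]] := extend.
by exists X => //; split=> //; apply/subrelbP.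
Qed.

Theorem mainTheorem5 (V Dt : finType) (M : plane_map V Dt) (S : {set V})
    (C : corr V) (phi0 : V -> 'I_3) (D : Dt) :
  minimal_counterexample M S C phi0 ->
  S = face_verts M D ->
  forall u v : V, adj M u v -> [set u; v] \notin face_edges M D ->
    2 <= corr_size C u v /\
    ((~ exists w, adj M u w && adj M v w) -> corr_size C u v = 3).
Proof.
move=> minimal _ u v guv _.
have [[[plane noadj _ _] [ca ct _ _]] _] := minimal.
have gsym := adj_sym plane; have girr := adj_irr plane.
have neq_uv : u != v by apply: contraTneq guv => ->; rewrite girr.
have not_enlargeable := minimal_counterexample_not_enlargeable minimal guv.
have mCuv := corr_matching ca u v.
have triangle_free_gt2 : (forall w, ~~ (adj M u w && adj M v w)) -> 2 < rel_size (C u v).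
  move=> no_w; rewrite ltnNge; apply/negP => small.
  apply: not_enlargeable (matching_enlargeable mCuv small) => X mX; split=> //.
  apply: consistent_set_edge => // w guw gvw.
  by have := no_w w; rewrite guw gvw.
rewrite /corr_size -rel_sizeE; split.
  rewrite ltnNge; apply/negP => small.
  case: (pickP (fun w => adj M u w && adj M v w)) => [w /andP [guw gvw] | no_w]; last first.
    by have := triangle_free_gt2 (fun w => negbT (no_w w)); rewrite ltnNge (leq_trans small).
  have tC : triangle_consistent (C u v) (C v w) (C w u).
    by rewrite -consistent_atE //; apply: consistent_at_triangle; rewrite // gsym.
  have := triangle_matching_enlargeable mCuv (corr_matching ca v w) (corr_matching ca w u) tC small.
  apply: not_enlargeable => X /andP [mX tX]; split=> //.
  exact: consistent_set_edge_triangle guw gvw tX.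
move=> no_w; apply/eqP; rewrite eqn_leq rel_size_le3 //; apply: triangle_free_gt2 => w.
by apply/negP => uvw; apply: no_w; exists w.
Qed.
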